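(* Consider two user types $k\in\{1,2\}$ (write $-k$ for the other type), with $N_k$ users of type $k$, individual arrival rate $\lambda_k$, departure rate $\mu_k$, and instantaneous utility of use $u_k(\tau)=\alpha_k-\beta_k/\tau$ ($\alpha_k,\beta_k>0$). Suppose the service provider uses CSMA with transmission probability $p\in(0,1)$, has no admission control (every arriving user is admitted), and offers the pricing policy $\mathbf P=(\phi,(p_s,0))$. Let $a_j=\lambda_j/(\lambda_j+\mu_j)$ and $x_j(\pi_{j,1})=\pi_{j,1}\,a_j\,\frac{p}{1-p}+1$ for $j=1,2$. When the other users play according to the profile $\pi=(\pi_1,\pi_2)$, $\pi_j=[\pi_{j,0},\pi_{j,1}]$, the expected utility of use and expected cost of a particular type-$k$ user playing $\pi_k'=[\pi_{k,0}',\pi_{k,1}']$ are $$U_k(\theta,\alpha,(\pi;\pi_k'))=\pi_{k,1}'\,\Delta T\,a_k\Big[\alpha_k-\frac{\beta_k}{p}\big(x_k(\pi_{k,1})\big)^{N_k-1}\big(x_{-k}(\pi_{-k,1})\big)^{N_{-k}}\Big]$$ and $C_k(\theta,\alpha,\mathbf P,(\pi;\pi_k'))=\pi_{k,1}'\,p_s$.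
   Context: Plan $0$ is the dummy plan $\phi$ (no subscription); plan $1$ charges subscription fee $p_s\ge0$ per billing period of length $\Delta T$ and zero per-unit charge. Each type-$k$ user independently chooses plan $1$ with probability $\pi_{k,1}$ (the particular user with probability $\pi_{k,1}'$), fixed thereafter; the realization gives $n_{k,1}$ type-$k$ users on plan $1$. Each plan-1 user alternates: while offline it arrives at the network after an exponential time of rate $\lambda_k$, and while online it departs after an exponential time of rate $\mu_k$, independently; $\mathbf X(\infty)$ denotes the steady-state system state, $x_{k,1}$ the number of online type-$k$ plan-1 users. Under the CSMA protocol (equivalent to slotted ALOHA with transmission probability $p$, normalized bandwidth $1$) an online user's throughput when $X=x_{1,1}+x_{2,1}$ users are online is $\tau(\mathbf x)=p(1-p)^{X-1}$. Definitions: $V_k^1(\mathbf n)=\Delta T\sum_{\mathbf x}\Pr(\mathbf X(\infty)=\mathbf x)\frac{x_{k,1}}{n_{k,1}}u_k(\tau(\mathbf x))$; $U_k(\theta,\alpha,(\pi;\pi_k'))=\pi_{k,1}'\sum_{\mathbf n:n_{k,1}\ge1}\Pr(\mathbf n\mid k,1)V_k^1(\mathbf n)$, where $\Pr(\mathbf n\mid k,1)$ is the probability of the realization $\mathbf n$ given that the particular user chose plan $1$ (other users choosing independently according to $\pi$); $C_k(\theta,\alpha,\mathbf P,(\pi;\pi_k'))=\pi_{k,1}'\big(p_s+\sum_{\mathbf n}\Pr(\mathbf n\mid k,1)\cdot 0\cdot B_k^1(\mathbf n)\big)$. *)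

(* User types: k : bool, with true = type 1, false = type 2;
   the "other type" -k is ~~ k. *)
From mathcomp Require Import all_boot all_order all_algebra.
Set Implicit Arguments. Unset Strict Implicit. Unset Printing Implicit Defensive.
Import Order.TTheory GRing.Theory Num.Theory.
Local Open Scope ring_scope.

Definition sel {T : Type} (k : bool) (a b : T) : T := if k then a else b.

(* Steady-state (stationary) distribution of the system state
   (x_{1,1}, x_{2,1}) when n1 type-1 and n2 type-2 users are on plan 1 and
   there is no admission control: each offline user arrives at rate lam j,
   each online user departs at rate mu j. *)
Definition is_stationary (R : realFieldType) (lam mu : bool -> R)
    (n1 n2 : nat) (P : nat -> nat -> R) : Prop :=
  [/\ (forall x1 x2, (x1 <= n1)%N -> (x2 <= n2)%N -> 0 <= P x1 x2),
      \sum_(x1 < n1.+1) \sum_(x2 < n2.+1) P x1 x2 = 1 &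
      (forall x1 x2, (x1 <= n1)%N -> (x2 <= n2)%N ->
        P x1 x2 * ((n1 - x1)%:R * lam true + x1%:R * mu true
                   + (n2 - x2)%:R * lam false + x2%:R * mu false)
        = (if (0 < x1)%N then P x1.-1 x2 * (n1 - x1.-1)%:R * lam true else 0)
        + (if (x1 < n1)%N then P x1.+1 x2 * x1.+1%:R * mu true else 0)
        + (if (0 < x2)%N then P x1 x2.-1 * (n2 - x2.-1)%:R * lam false else 0)
        + (if (x2 < n2)%N then P x1 x2.+1 * x2.+1%:R * mu false else 0))].

(* CSMA (slotted ALOHA) per-user throughput with X = x1 + x2 online users *)
Definition tau (R : realFieldType) (p : R) (x1 x2 : nat) : R :=
  p * (1 - p) ^ ((x1 + x2)%N%:Z - 1).

Definition util (R : realFieldType) (alpha beta : bool -> R) (k : bool) (t : R) : R :=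
  alpha k - beta k / t.

Definition Vk1 (R : realFieldType) (alpha beta : bool -> R) (p dT : R) (k : bool)
    (n1 n2 : nat) (P : nat -> nat -> R) : R :=
  dT * \sum_(x1 < n1.+1) \sum_(x2 < n2.+1)
         P x1 x2 * ((sel k (x1 : nat) (x2 : nat))%:R / (sel k n1 n2)%:R)
                 * util alpha beta k (tau p x1 x2).

Definition binpmf (R : realFieldType) (m : nat) (q : R) (j : nat) : R :=
  'C(m, j)%:R * q ^+ j * (1 - q) ^+ (m - j).

(* Pr(n | k, 1): the particular type-k user is on plan 1, the other N_k - 1
   type-k users and the N_{-k} type-(-k) users choose plan 1 independently
   with probabilities pi k, pi (~~ k). *)
Definition prob_cond (R : realFieldType) (N : bool -> nat) (pi : bool -> R)
    (k : bool) (n1 n2 : nat) : R :=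
  let nk := sel k n1 n2 in let no := sel k n2 n1 in
  if (0 < nk)%N then binpmf (N k).-1 (pi k) nk.-1 * binpmf (N (~~ k)) (pi (~~ k)) no
  else 0.

(* U_k(theta, alpha, (pi; pi'_k)); SD n1 n2 is the steady-state distribution
   for the realization n = (n1, n2) *)
Definition Uk (R : realFieldType) (N : bool -> nat) (alpha beta : bool -> R)
    (p dT : R) (pi : bool -> R) (k : bool) (pi' : R)
    (SD : nat -> nat -> nat -> nat -> R) : R :=
  pi' * \sum_(n1 < (N true).+1) \sum_(n2 < (N false).+1 | (0 < sel k (n1 : nat) (n2 : nat))%N)
          prob_cond N pi k n1 n2 * Vk1 alpha beta p dT k n1 n2 (SD n1 n2).

(* C_k(theta, alpha, P, (pi; pi'_k)) with per-unit charge 0 and usage B_k^1 *)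
Definition Ck (R : realFieldType) (N : bool -> nat) (pi : bool -> R) (k : bool)
    (pi' ps : R) (B : nat -> nat -> R) : R :=
  pi' * (ps + \sum_(n1 < (N true).+1) \sum_(n2 < (N false).+1)
                 prob_cond N pi k n1 n2 * 0 * B n1 n2).

Definition aa (R : realFieldType) (lam mu : bool -> R) (j : bool) : R :=
  lam j / (lam j + mu j).

Definition xx (R : realFieldType) (lam mu : bool -> R) (p : R) (j : bool) (q : R) : R :=
  q * aa lam mu j * (p / (1 - p)) + 1.

From mathcomp Require Import all_boot all_order all_algebra.
From mathcomp Require Import ring lra.
Import Order.TTheory GRing.Theory Num.Theory.
Local Open Scope ring_scope.

(* Without admission control the users move independently, so the stationary
   law of the numbers of online users is the product of the binomial laws
   Bin(n_j, a_j).  Each binomial satisfies detailed balance, and the product is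
   the only stationary law: the global balance equations make the ratio
   P / (product of binomials) harmonic on the connected grid, hence constant by
   the maximum principle.  Since 1 / tau = (1-p) c^(x_1+x_2) / p with
   c = (1-p)^-1, V_k^1 reduces to the binomial moments E[X c^X] and E[c^X], i.e.
   to the generating function E[y^Bin(m,q)] = (q y + 1 - q)^m; averaging over the
   binomial realization of n uses it once more, with y = a_j c + 1 - a_j, which
   gives x_j(q)^m. *)

Section Binomial.
Context {R : realFieldType}.
Implicit Types (q c l m : R) (n x : nat).

Definition bern_pgf q c : R := q * c + (1 - q).

Lemma sum_binpmf_expr n q c :
  \sum_(j < n.+1) binpmf n q j * c ^+ j = bern_pgf q c ^+ n.
Proof.
rewrite /bern_pgf addrC exprDn; apply: eq_bigr => j _.
rewrite /binpmf -mulr_natl exprMn; ring.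
Qed.

Lemma bern_pgf1 q : bern_pgf q 1 = 1.
Proof. by rewrite /bern_pgf mulr1 addrC subrK. Qed.

Lemma sum_binpmf n q : \sum_(j < n.+1) binpmf n q j = 1.
Proof.
have := sum_binpmf_expr n q 1; rewrite bern_pgf1 expr1n => <-.
by apply: eq_bigr => j _; rewrite expr1n mulr1.
Qed.

Lemma sum_binpmf_natr_expr n q c :
  \sum_(j < n.+1) binpmf n q j * j%:R * c ^+ j
  = n%:R * q * c * bern_pgf q c ^+ n.-1.
Proof.
case: n => [|n]; first by rewrite big_ord1 !mulr0 !mul0r.
rewrite big_ord_recl mulr0 mul0r add0r -sum_binpmf_expr mulr_sumr.
apply: eq_bigr => j _; rewrite lift0 /binpmf subSS.
have binS : ('C(n.+1, j.+1)%:R : R) * j.+1%:R = n.+1%:R * 'C(n, j)%:R.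
  by rewrite -!natrM mulnC mul_bin_diag.
rewrite !exprS.
transitivity ('C(n.+1, j.+1)%:R * j.+1%:R * q ^+ j * (1 - q) ^+ (n - j)
              * c ^+ j * q * c); first ring.
rewrite binS; ring.
Qed.

Lemma binpmf_gt0 n q x : 0 < q -> q < 1 -> (x <= n)%N -> 0 < binpmf n q x.
Proof.
move=> q_gt0 q_lt1 le_xn; rewrite /binpmf !mulr_gt0 ?exprn_gt0 ?subr_gt0 //.
by rewrite ltr0n bin_gt0.
Qed.

Lemma binpmf_balance n l m x : 0 < l -> 0 < m -> (x < n)%N ->
  binpmf n (l / (l + m)) x * (n - x)%:R * l
  = binpmf n (l / (l + m)) x.+1 * x.+1%:R * m.
Proof.
move=> l_gt0 m_gt0 lt_xn.
have lm_neq0 : l + m != 0 by rewrite gt_eqF ?addr_gt0.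
have q'E : 1 - l / (l + m) = m / (l + m) by field.
have binS : ('C(n, x)%:R : R) * (n - x)%:R = 'C(n, x.+1)%:R * x.+1%:R.
  by rewrite -!natrM mulnC -mul_bin_left mulnC.
rewrite /binpmf q'E -(subnSK lt_xn) !exprS subnSK //.
transitivity ('C(n, x)%:R * (n - x)%:R * (l / (l + m)) ^+ x
              * (m / (l + m)) ^+ (n - x.+1) * (m / (l + m)) * l); first ring.
by rewrite binS; field.
Qed.

Lemma binpmf_flux_below n l m c x : 0 < l -> 0 < m -> (x <= n)%N ->
  (if (0 < x)%N then c * binpmf n (l / (l + m)) x.-1 * (n - x.-1)%:R * l else 0)
  = c * binpmf n (l / (l + m)) x * (x%:R * m).
Proof.
case: x => [|x] l_gt0 m_gt0 le_xn; first by rewrite mul0r mulr0.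
by rewrite -(mulrA c) -mulrA binpmf_balance // !mulrA.
Qed.

Lemma binpmf_flux_above n l m c x : 0 < l -> 0 < m -> (x <= n)%N ->
  (if (x < n)%N then c * binpmf n (l / (l + m)) x.+1 * x.+1%:R * m else 0)
  = c * binpmf n (l / (l + m)) x * ((n - x)%:R * l).
Proof.
move=> l_gt0 m_gt0 le_xn; case: ltnP => [lt_xn | le_nx].
  by rewrite -(mulrA c) -mulrA -binpmf_balance // !mulrA.
have /eqP -> : (n - x == 0)%N by rewrite subn_eq0.
by rewrite mul0r mulr0.
Qed.
End Binomial.

Lemma segment_spread (Q : nat -> Prop) (n a : nat) : (a <= n)%N -> Q a ->
  (forall x, (x <= n)%N -> Q x -> ((0 < x)%N -> Q x.-1) /\ ((x < n)%N -> Q x.+1)) ->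
  forall x, (x <= n)%N -> Q x.
Proof.
move=> le_an Qa Qstep.
have Qdown d : (d <= a)%N -> Q (a - d)%N.
  elim: d => [|d IHd] le_da; first by rewrite subn0.
  have := (Qstep _ (leq_trans (leq_subr _ _) le_an) (IHd (ltnW le_da))).1.
  by rewrite subn_gt0 subnS; apply.
elim=> [|x IHx] le_xn; first by rewrite -(subnn a); apply: Qdown.
exact: (Qstep _ (ltnW le_xn) (IHx (ltnW le_xn))).2.
Qed.

Lemma aa_gt0 (R : realFieldType) (lam mu : bool -> R) j :
  0 < lam j -> 0 < mu j -> 0 < aa lam mu j.
Proof. by move=> l_gt0 m_gt0; rewrite divr_gt0 ?addr_gt0. Qed.

Lemma aa_lt1 (R : realFieldType) (lam mu : bool -> R) j :
  0 < lam j -> 0 < mu j -> aa lam mu j < 1.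
Proof. by move=> l_gt0 m_gt0; rewrite ltr_pdivrMr ?addr_gt0 // mul1r ltrDl. Qed.

Lemma natr_gap_ge0 (R : numDomainType) (x : nat) (r d M : R) :
  0 < r -> ((0 < x)%N -> d <= M) -> 0 <= x%:R * r * (M - d).
Proof.
case: x => [|x] r_gt0 le_dM; first by rewrite !mul0r.
by rewrite !mulr_ge0 ?ler0n ?subr_ge0 ?le_dM ?(ltW r_gt0).
Qed.

Lemma natr_gap_eq0 {R : numDomainType} {x : nat} {r d M : R} :
  0 < r -> (0 < x)%N -> x%:R * r * (M - d) = 0 -> d = M.
Proof.
move=> r_gt0 x_gt0 /eqP.
rewrite !mulf_eq0 pnatr_eq0 (gtn_eqF x_gt0) (gt_eqF r_gt0) /=.
by rewrite subr_eq0 => /eqP.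
Qed.

Section ProductForm.
Variables (R : realFieldType) (lam mu : bool -> R).
Hypotheses (lam_gt0 : forall j, 0 < lam j) (mu_gt0 : forall j, 0 < mu j).
Variables (n1 n2 : nat) (P : nat -> nat -> R).
Hypothesis P_stat : is_stationary lam mu n1 n2 P.

Let b1 := binpmf n1 (aa lam mu true).
Let b2 := binpmf n2 (aa lam mu false).
Let D x1 x2 := P x1 x2 / (b1 x1 * b2 x2).

Let b1b2_gt0 x1 x2 : (x1 <= n1)%N -> (x2 <= n2)%N -> 0 < b1 x1 * b2 x2.
Proof.
by move=> le1 le2; rewrite mulr_gt0 ?binpmf_gt0 ?aa_gt0 ?aa_lt1.
Qed.

Let P_ratio x1 x2 : (x1 <= n1)%N -> (x2 <= n2)%N -> P x1 x2 = D x1 x2 * b1 x1 * b2 x2.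
Proof. by move=> le1 le2; rewrite -mulrA mulfVK ?lt0r_neq0 ?b1b2_gt0. Qed.

(* D is junk outside the grid, but there its coefficient below vanishes. *)
Lemma stationary_ratio_harmonic x1 x2 : (x1 <= n1)%N -> (x2 <= n2)%N ->
  x1%:R * mu true * (D x1 x2 - D x1.-1 x2)
  + (n1 - x1)%:R * lam true * (D x1 x2 - D x1.+1 x2)
  + x2%:R * mu false * (D x1 x2 - D x1 x2.-1)
  + (n2 - x2)%:R * lam false * (D x1 x2 - D x1 x2.+1) = 0.
Proof.
move=> le1 le2; have [_ _ balance] := P_stat.
have in1 : (if (0 < x1)%N then P x1.-1 x2 * (n1 - x1.-1)%:R * lam true else 0)
         = D x1.-1 x2 * b2 x2 * b1 x1 * (x1%:R * mu true).
  rewrite -(binpmf_flux_below _ _ _ _ _ (lam_gt0 _) (mu_gt0 _)) //; case: ifP => // _.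
  by rewrite P_ratio ?(leq_trans (leq_pred _) le1) // [D _ _ * _ * _]mulrAC.
have out1 : (if (x1 < n1)%N then P x1.+1 x2 * x1.+1%:R * mu true else 0)
          = D x1.+1 x2 * b2 x2 * b1 x1 * ((n1 - x1)%:R * lam true).
  rewrite -(binpmf_flux_above _ _ _ _ _ (lam_gt0 _) (mu_gt0 _)) //; case: ifP => // lt1.
  by rewrite P_ratio // [D _ _ * _ * _]mulrAC.
have in2 : (if (0 < x2)%N then P x1 x2.-1 * (n2 - x2.-1)%:R * lam false else 0)
         = D x1 x2.-1 * b1 x1 * b2 x2 * (x2%:R * mu false).
  rewrite -(binpmf_flux_below _ _ _ _ _ (lam_gt0 _) (mu_gt0 _)) //; case: ifP => // _.
  by rewrite P_ratio ?(leq_trans (leq_pred _) le2).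
have out2 : (if (x2 < n2)%N then P x1 x2.+1 * x2.+1%:R * mu false else 0)
          = D x1 x2.+1 * b1 x1 * b2 x2 * ((n2 - x2)%:R * lam false).
  rewrite -(binpmf_flux_above _ _ _ _ _ (lam_gt0 _) (mu_gt0 _)) //; case: ifP => // lt2.
  by rewrite P_ratio.
move/eqP: (balance x1 x2 le1 le2); rewrite in1 out1 in2 out2 P_ratio //.
rewrite -subr_eq0 => /eqP bal0.
apply: (mulfI (lt0r_neq0 (b1b2_gt0 _ _ le1 le2))); rewrite mulr0 -bal0; ring.
Qed.

Lemma stationary_ratio_max_spread M x1 x2 : (x1 <= n1)%N -> (x2 <= n2)%N ->
  (forall y1 y2, (y1 <= n1)%N -> (y2 <= n2)%N -> D y1 y2 <= M) -> D x1 x2 = M ->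
  [/\ (0 < x1)%N -> D x1.-1 x2 = M, (x1 < n1)%N -> D x1.+1 x2 = M,
      (0 < x2)%N -> D x1 x2.-1 = M & (x2 < n2)%N -> D x1 x2.+1 = M].
Proof.
move=> le1 le2 D_le DxM.
have := stationary_ratio_harmonic _ _ le1 le2; rewrite DxM.
have g1 : 0 <= x1%:R * mu true * (M - D x1.-1 x2).
  by apply: natr_gap_ge0 => // _; apply: D_le; rewrite ?(leq_trans (leq_pred _) le1).
have g2 : 0 <= (n1 - x1)%:R * lam true * (M - D x1.+1 x2).
  by apply: natr_gap_ge0 => // /[!subn_gt0] lt1; apply: D_le.
have g3 : 0 <= x2%:R * mu false * (M - D x1 x2.-1).
  by apply: natr_gap_ge0 => // _; apply: D_le; rewrite ?(leq_trans (leq_pred _) le2).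
have g4 : 0 <= (n2 - x2)%:R * lam false * (M - D x1 x2.+1).
  by apply: natr_gap_ge0 => // /[!subn_gt0] lt2; apply: D_le.
move=> E; split=> lt.
- by apply: (natr_gap_eq0 (mu_gt0 true) lt); lra.
- by rewrite -subn_gt0 in lt; apply: (natr_gap_eq0 (lam_gt0 true) lt); lra.
- by apply: (natr_gap_eq0 (mu_gt0 false) lt); lra.
- by rewrite -subn_gt0 in lt; apply: (natr_gap_eq0 (lam_gt0 false) lt); lra.
Qed.

Lemma stationary_binomial x1 x2 : (x1 <= n1)%N -> (x2 <= n2)%N ->
  P x1 x2 = b1 x1 * b2 x2.
Proof.
case: (@arg_maxP _ R _ (ord0, ord0) xpredT
  (fun i : 'I_n1.+1 * 'I_n2.+1 => D i.1 i.2) isT) => -[i1 i2] _ D_max.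
set M := D i1 i2 in D_max.
have D_le y1 y2 : (y1 <= n1)%N -> (y2 <= n2)%N -> D y1 y2 <= M.
  by move=> le1 le2; have := D_max (inord y1, inord y2) isT; rewrite /= !inordK.
have D_row y1 : (y1 <= n1)%N -> D y1 i2 = M.
  apply: (@segment_spread (fun y => D y i2 = M) n1 i1 (ltn_ord i1)) => // y le_y DyM.
  by have [? ? _ _] := stationary_ratio_max_spread _ _ _ le_y (ltn_ord i2) D_le DyM.
have D_const y1 y2 : (y1 <= n1)%N -> (y2 <= n2)%N -> D y1 y2 = M.
  move=> le1; apply: (@segment_spread (fun y => D y1 y = M) n2 i2 (ltn_ord i2)).
    exact: D_row.
  move=> y le_y DyM.
  by have [_ _ ? ?] := stationary_ratio_max_spread _ _ _ le1 le_y D_le DyM.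
have M1 : M = 1.
  have [_ <- _] := P_stat.
  rewrite -[M]mulr1 -(sum_binpmf n1 (aa lam mu true)) -(mulr1 (\sum_(i < _) _)).
  rewrite -(sum_binpmf n2 (aa lam mu false)) big_distrlr mulr_sumr.
  apply: eq_bigr => i _; rewrite mulr_sumr; apply: eq_bigr => j _.
  by rewrite P_ratio ?D_const ?mulrA // -ltnS ltn_ord.
by move=> le1 le2; rewrite P_ratio // D_const // M1 mul1r.
Qed.
End ProductForm.

Lemma sum_sum_prodB (R : comPzRingType) (m n : nat) (A B : R)
    (f f' : 'I_m -> R) (g g' : 'I_n -> R) :
  \sum_(i < m) \sum_(j < n) (A * (f i * g j) - B * (f' i * g' j))
  = A * ((\sum_(i < m) f i) * (\sum_(j < n) g j))
    - B * ((\sum_(i < m) f' i) * (\sum_(j < n) g' j)).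
Proof.
rewrite !big_distrlr !mulr_sumr -sumrB; apply: eq_bigr => i _.
by rewrite !mulr_sumr -sumrB.
Qed.

Lemma tauC (R : realFieldType) (p : R) x y : tau p x y = tau p y x.
Proof. by rewrite /tau addnC. Qed.

Lemma Vk1_swap (R : realFieldType) (alpha beta : bool -> R) (p dT : R) n1 n2 P :
  Vk1 alpha beta p dT false n1 n2 P
  = Vk1 (alpha \o negb) (beta \o negb) p dT true n2 n1 (fun x2 x1 => P x1 x2).
Proof.
rewrite /Vk1 exchange_big; congr (dT * _); apply: eq_bigr => x2 _.
by apply: eq_bigr => x1 _; rewrite tauC.
Qed.

Lemma Uk_swap (R : realFieldType) N (alpha beta : bool -> R) (p dT : R) pi pi' SD :
  Uk N alpha beta p dT pi false pi' SD
  = Uk (N \o negb) (alpha \o negb) (beta \o negb) p dT (pi \o negb) true pi'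
       (fun n2 n1 x2 x1 => SD n1 n2 x1 x2).
Proof.
rewrite /Uk; congr (pi' * _); under eq_bigr do rewrite big_mkcond.
rewrite exchange_big; apply: eq_bigr => n2 _; rewrite [RHS]big_mkcond.
by apply: eq_bigr => n1 _; rewrite Vk1_swap.
Qed.

Section Utility.
Context {R : realFieldType} (alpha beta : bool -> R) (p dT : R).
Hypotheses (p_gt0 : 0 < p) (p_lt1 : p < 1).
Let c := (1 - p)^-1.

(* For x = 0 the exponent of tau is -1, which the factor x makes irrelevant. *)
Lemma natr_div_tau x y : x%:R / tau p x y = x%:R * c ^+ x * c ^+ y * (1 - p) / p.
Proof.
case: x => [|x]; first by rewrite !mul0r.
have q_neq0 : 1 - p != 0 by rewrite subr_eq0 eq_sym lt_eqF.
have -> : tau p x.+1 y = p * (1 - p) ^+ (x + y).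
  by rewrite /tau addSn -addn1 PoszD addrK.
rewrite /c exprS exprD !exprVn.
set qx := (1 - p) ^+ x; set qy := (1 - p) ^+ y; set q := 1 - p.
have qx_neq0 : qx != 0 by rewrite expf_neq0.
have qy_neq0 : qy != 0 by rewrite expf_neq0.
field.
by rewrite (gt_eqF p_gt0) q_neq0 qx_neq0 qy_neq0.
Qed.

Lemma Vk1_binomial n1 n2 P a1 a2 : (0 < n1)%N ->
  (forall x1 x2, (x1 <= n1)%N -> (x2 <= n2)%N ->
     P x1 x2 = binpmf n1 a1 x1 * binpmf n2 a2 x2) ->
  Vk1 alpha beta p dT true n1 n2 P
  = dT * a1 * (alpha true - beta true / p * bern_pgf a1 c ^+ n1.-1
                                          * bern_pgf a2 c ^+ n2).
Proof.
move=> n1_gt0 P_bin.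
have q_neq0 : 1 - p != 0 by rewrite subr_eq0 eq_sym lt_eqF.
have n1_neq0 : n1%:R != 0 :> R by rewrite pnatr_eq0 -lt0n.
have term (x1 : 'I_n1.+1) (x2 : 'I_n2.+1) :
    P x1 x2 * (x1%:R / n1%:R) * util alpha beta true (tau p x1 x2)
    = alpha true / n1%:R * (binpmf n1 a1 x1 * x1%:R * 1 ^+ x1 * binpmf n2 a2 x2)
      - beta true * (1 - p) / (p * n1%:R)
        * (binpmf n1 a1 x1 * x1%:R * c ^+ x1 * (binpmf n2 a2 x2 * c ^+ x2)).
  rewrite P_bin ?(ltn_ord x1 : (x1 <= n1)%N) ?(ltn_ord x2 : (x2 <= n2)%N) // /util.
  transitivity (binpmf n1 a1 x1 * binpmf n2 a2 x2 / n1%:R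
                * (alpha true * x1%:R - beta true * (x1%:R / tau p x1 x2))).
    set t := tau p x1 x2; ring.
  rewrite natr_div_tau expr1n; field.
  by rewrite (gt_eqF p_gt0) n1_neq0.
rewrite /Vk1 /=; under eq_bigr do under eq_bigr do rewrite term.
rewrite sum_sum_prodB !sum_binpmf_natr_expr sum_binpmf sum_binpmf_expr bern_pgf1.
rewrite expr1n /c; field.
by rewrite q_neq0 (gt_eqF p_gt0) n1_neq0.
Qed.

Lemma Uk_binomial N pi pi' SD a1 a2 : (0 < N true)%N ->
  (forall n1 n2 x1 x2, (x1 <= n1)%N -> (x2 <= n2)%N ->
     SD n1 n2 x1 x2 = binpmf n1 a1 x1 * binpmf n2 a2 x2) ->
  Uk N alpha beta p dT pi true pi' SD
  = pi' * dT * a1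
    * (alpha true - beta true / p * bern_pgf (pi true) (bern_pgf a1 c) ^+ (N true).-1
                                  * bern_pgf (pi false) (bern_pgf a2 c) ^+ N false).
Proof.
case E: (N true) => [|m] // _ SD_bin.
rewrite /Uk E big_ord_recl big_pred0 // add0r.
set y1 := bern_pgf a1 c; set y2 := bern_pgf a2 c.
transitivity (pi' * \sum_(i < m.+1) \sum_(j < (N false).+1)
  (dT * a1 * alpha true * (binpmf m (pi true) i * binpmf (N false) (pi false) j)
   - dT * a1 * beta true / p
     * (binpmf m (pi true) i * y1 ^+ i * (binpmf (N false) (pi false) j * y2 ^+ j)))).
  congr (pi' * _); apply: eq_bigr => i _; apply: eq_bigr => j _.
  rewrite /prob_cond /= E (Vk1_binomial _ _ _ _ _ _ (SD_bin _ _)) // -/y1 -/y2 add0n.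
  by rewrite [(bump 0 i).-1]/=; ring.
rewrite sum_sum_prodB !sum_binpmf !sum_binpmf_expr /=; ring.
Qed.
End Utility.

Lemma xx_bern_pgf (R : realFieldType) (lam mu : bool -> R) (p : R) j q : p < 1 ->
  xx lam mu p j q = bern_pgf q (bern_pgf (aa lam mu j) (1 - p)^-1).
Proof.
move=> p_lt1; have q_neq0 : 1 - p != 0 by rewrite subr_eq0 eq_sym lt_eqF.
by rewrite /xx /bern_pgf; field.
Qed.

Theorem lemma1 (R : realFieldType) (N : bool -> nat)
    (lam mu alpha beta : bool -> R) (p dT ps : R) (pi : bool -> R)
    (k : bool) (pi' : R) (SD : nat -> nat -> nat -> nat -> R)
    (B : nat -> nat -> R) :
  (forall j, 0 < lam j) -> (forall j, 0 < mu j) ->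
  (forall j, 0 < alpha j) -> (forall j, 0 < beta j) ->
  0 < p -> p < 1 -> 0 < dT -> 0 <= ps ->
  (forall j, 0 <= pi j <= 1) -> 0 <= pi' <= 1 ->
  (0 < N k)%N ->
  (forall n1 n2, is_stationary lam mu n1 n2 (SD n1 n2)) ->
  Uk N alpha beta p dT pi k pi' SD
    = pi' * dT * aa lam mu k
      * (alpha k - beta k / p * (xx lam mu p k (pi k)) ^+ (N k).-1
                   * (xx lam mu p (~~ k) (pi (~~ k))) ^+ N (~~ k))
  /\ Ck N pi k pi' ps B = pi' * ps.
Proof.
move=> lam_gt0 mu_gt0 _ _ p_gt0 p_lt1 _ _ _ _ Nk_gt0 SD_stat.
split; last first.
  by rewrite /Ck big1 ?addr0 // => n1 _; rewrite big1 // => n2 _; rewrite mulr0 mul0r.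
have SD_bin n1 n2 x1 x2 : (x1 <= n1)%N -> (x2 <= n2)%N ->
    SD n1 n2 x1 x2 = binpmf n1 (aa lam mu true) x1 * binpmf n2 (aa lam mu false) x2.
  exact: stationary_binomial.
rewrite !xx_bern_pgf //; case: k Nk_gt0 => Nk_gt0.
  exact: Uk_binomial.
rewrite Uk_swap; apply: Uk_binomial => // n2 n1 x2 x1 le2 le1.
by rewrite mulrC SD_bin.
Qed.
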